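(* Let $G=\langle \mathcal{V},E\rangle$ be a finite undirected graph, let $m\ge 1$ be the number of pursuers, let $f:\mathcal{V}^m\times\mathcal{V}\to\{0,1\}$ be a termination function, and let $\gamma\in(0,1)$. Consider the no-exit pursuit-evasion Markov game on $G$ described in the context, and let $D:\mathcal{V}^m\times\mathcal{V}\to\mathbb{N}\cup\{\infty\}$ and the policies $\mu,\nu$ be the output of the dynamic programming algorithm described in the context. If this game admits a pure-strategy Nash equilibrium, then for every state $s=(s_p,s_e)$ the Nash value satisfies $V^*(s)=\gamma^{D(s_p,s_e)}$, and the joint policy $(\mu,\nu)$ is a Nash equilibrium of the game.
   Context: For a node $v\in\mathcal{V}$, $\mathrm{Neighbor}(v)$ denotes the set of nodes adjacent to $v$ together with $v$ itself. For $s_p=(v^1,\dots,v^m)\in\mathcal{V}^m$, $\mathrm{Neighbor}(s_p)=\mathrm{Neighbor}(v^1)\times\cdots\times\mathrm{Neighbor}(v^m)\subseteq\mathcal{V}^m$. Game: a two-player zero-sum Markov game with state space $S=\mathcal{V}^m\times\mathcal{V}$; a state $s=(s_p,s_e)$ lists the positions $s_p=(v_p^1,\dots,v_p^m)$ of the $m$ pursuers (together the max-player) and the position $s_e=v_e$ of the evader (the min-player). At each step both players move simultaneously: the pursuer team chooses $a\in\mathrm{Neighbor}(s_p)$ and the evader chooses $b\in\mathrm{Neighbor}(s_e)$; the transition is deterministic to the state $(a,b)$. States with $f(s_p,s_e)=1$ are terminal: the game ends there with reward $+1$ to the pursuers; all other rewards are $0$; the discount factor is $\gamma$. Thus the Nash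 value $V^*$ satisfies $V^*(s)=1$ if $f(s)=1$, and otherwise $V^*(s)=\max_{\mu(s)\in\Delta(\mathcal{A})}\min_{b}\sum_a\mu(s,a)\,\gamma V^*(a,b)$. A Nash equilibrium $(\mu^*,\nu^* )$ satisfies $V^{\mu,\nu^*}\le V^{\mu^*,\nu^*}\le V^{\mu^*,\nu}$ at all states for all policies $\mu,\nu$; a pure-strategy Nash equilibrium is one in which both policies are deterministic. We use the convention $\gamma^{\infty}=0$. Algorithm: Initialize an empty FIFO queue $\mathcal{Q}$ and set $D\equiv\infty$. For every $(s_p,s_e)$ with $f(s_p,s_e)=1$, set $D(s_p,s_e)=0$ and push $(s_p,s_e)$ into $\mathcal{Q}$. While $\mathcal{Q}$ is nonempty: pop the first element $(s_p,s_e)$; for each $n_e\in\mathrm{Neighbor}(s_e)$ such that there is no $n_e'\in\mathrm{Neighbor}(n_e)$ with $D(s_p,n_e')>D(s_p,s_e)$, and for each $n_p\in\mathrm{Neighbor}(s_p)$ with $D(n_p,n_e)=\infty$, set $D(n_p,n_e)=D(s_p,s_e)+1$ and push $(n_p,n_e)$ into $\mathcal{Q}$. Finally, for every state $(s_p,s_e)$, define the pursuer policy $\mu(s_p,s_e)\in\arg\min_{n_p\in\mathrm{Neighbor}(s_p)}\max_{n_e\in\mathrm{Neighbor}(s_e)}D(n_p,n_e)$ and the evader policy $\nu(s_p,s_e)\in\arg\max_{n_e\in\mathrm{Neighbor}(s_e)}\min_{n_p\in\mathrm{Neighbor}(s_p)}D(n_p,n_e)$ (both deterministic). *)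

From HB Require Import structures.
From mathcomp Require Import all_boot all_order all_algebra.
From mathcomp Require Import all_classical all_reals all_analysis.
Set Implicit Arguments. Unset Strict Implicit. Unset Printing Implicit Defensive.
Import Order.TTheory GRing.Theory Num.Theory.
Import numFieldNormedType.Exports.
Local Open Scope ring_scope.

(* ---------- extended naturals N ∪ {∞}, encoded as option nat (None = ∞) ---------- *)
Definition leo (x y : option nat) : bool :=
  match x, y with
  | _, None => true
  | None, Some _ => false
  | Some a, Some b => (a <= b)%N
  end.
Definition gto (x y : option nat) : bool := ~~ leo x y.
Definition omax (x y : option nat) := if leo x y then y else x.
Definition omin (x y : option nat) := if leo x y then x else y.

Definition gpow {R : numDomainType} (gamma : R) (d : option nat) : R :=
  if d is Some n then gamma ^+ n else 0.

Section Game.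
Variable V : finType.
Variable adj : rel V.
Variable m : nat.

Local Notation pos := {ffun 'I_m -> V}.
Local Notation state := (pos * V)%type.

Definition nbr (v : V) (w : V) : bool := (w == v) || adj v w.
Definition nbrP (sp : pos) (a : pos) : bool := [forall i, nbr (sp i) (a i)].

Variable f : state -> bool.

Definition Dmap := state -> option nat.

Definition upd (D : Dmap) (t : state) (k : option nat) : Dmap :=
  fun s => if s == t then k else D s.

Definition expand_np (sp : pos) (ne : V) (k1 : option nat)
    (DQ : Dmap * seq state) (np : pos) : Dmap * seq state :=
  let: (D, Q) := DQ in
  if nbrP sp np && (D (np, ne) == None)
  then (upd D (np, ne) k1, rcons Q (np, ne))
  else (D, Q).

Definition expand_ne (sp : pos) (se : V) (k : option nat)
    (DQ : Dmap * seq state) (ne : V) : Dmap * seq state :=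
  let: (D, Q) := DQ in
  if nbr se ne && ~~ [exists ne', nbr ne ne' && gto (D (sp, ne')) k]
  then foldl (expand_np sp ne (omap succn k)) (D, Q) (enum pos)
  else (D, Q).

Definition bfs_step (DQ : Dmap * seq state) : Dmap * seq state :=
  let: (D, Q) := DQ in
  match Q with
  | [::] => (D, Q)
  | (sp, se) :: Q' => foldl (expand_ne sp se (D (sp, se))) (D, Q') (enum V)
  end.

Definition D_init : Dmap := fun s => if f s then Some 0%N else None.
Definition Q_init : seq state := [seq s <- enum {: state} | f s].

(* Each state is pushed at most once, so at most #|state| iterations occur;
   further iterations on the empty queue are the identity. *)
Definition Dalg : Dmap := (iter #|{: state}| bfs_step (D_init, Q_init)).1.

Definition maxD (D : Dmap) (np : pos) (se : V) : option nat :=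
  \big[omax/Some 0%N]_(ne | nbr se ne) D (np, ne).
Definition minD (D : Dmap) (sp : pos) (ne : V) : option nat :=
  \big[omin/None]_(np | nbrP sp np) D (np, ne).

Definition is_mu_of (D : Dmap) (mu : state -> pos) : Prop :=
  forall s, nbrP s.1 (mu s) /\
    forall np, nbrP s.1 np -> leo (maxD D (mu s) s.2) (maxD D np s.2).
Definition is_nu_of (D : Dmap) (nu : state -> V) : Prop :=
  forall s, nbr s.2 (nu s) /\
    forall ne, nbr s.2 ne -> leo (minD D s.1 ne) (minD D s.1 (nu s)).

Variable R : realType.

Definition pursuer_policy (mu : state -> pos -> R) : Prop :=
  forall s, (forall a, 0 <= mu s a) /\ (forall a, mu s a != 0 -> nbrP s.1 a)
            /\ \sum_(a : pos) mu s a = 1.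
Definition evader_policy (nu : state -> V -> R) : Prop :=
  forall s, (forall b, 0 <= nu s b) /\ (forall b, nu s b != 0 -> nbr s.2 b)
            /\ \sum_(b : V) nu s b = 1.

Definition det_pol {T : eqType} (p : state -> T) : state -> T -> R :=
  fun s a => (a == p s)%:R.

(* n-step value: expected discounted reward gamma^T * 1{T <= n}, where T is
   the hitting time of the terminal set (terminal states give reward 1). *)
Fixpoint Vn (gamma : R) (mu : state -> pos -> R) (nu : state -> V -> R)
    (n : nat) (s : state) : R :=
  if f s then 1 else
  match n with
  | 0 => 0
  | n'.+1 => gamma * \sum_(a : pos) \sum_(b : V) mu s a * nu s b * Vn gamma mu nu n' (a, b)
  end.

Definition value (gamma : R) (mu : state -> pos -> R) (nu : state -> V -> R)
    (s : state) : R := limn (fun n => Vn gamma mu nu n s).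

Definition is_NE (gamma : R) (mu : state -> pos -> R) (nu : state -> V -> R) : Prop :=
  pursuer_policy mu /\ evader_policy nu /\
  forall mu' nu', pursuer_policy mu' -> evader_policy nu' ->
    forall s, value gamma mu' nu s <= value gamma mu nu s /\
              value gamma mu nu s <= value gamma mu nu' s.

Definition has_pure_NE (gamma : R) : Prop :=
  exists (pmu : state -> pos) (pnu : state -> V),
    is_NE gamma (det_pol pmu) (det_pol pnu).

End Game.

(* The labels D computed by the algorithm vanish exactly on terminal states and,
   elsewhere, satisfy D(s) = 1 + min_a max_b D(a, b) over the moves a of the
   pursuers and b of the evader (with oo + 1 = oo): from a state of label k + 1
   the pursuers have a move after which every evader reply has label at most k,
   and against every pursuer move the evader has a reply of label at least
   D(s) - 1. Thus gamma^D is the value of the game in which the pursuers commit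
   first.
   Let (p, q) be a pure equilibrium with value W. No one-step deviation is
   profitable, so gamma W(a, q s) <= W(s) <= gamma W(p s, b) for all moves a, b;
   with the two properties of D this gives |W - gamma^D| <= gamma max |W - gamma^D|,
   hence W = gamma^D. The first inequality then says that the evader can commit
   first as well (to q s), so gamma^D is a saddle point of every one-step game.
   The argmin/argmax policies mu, nu attain it, which makes (mu, nu) an
   equilibrium of value gamma^D, and all equilibria of a zero-sum game share
   their value. *)

From HB Require Import structures.
From mathcomp Require Import all_boot all_order all_algebra.
From mathcomp Require Import all_classical all_reals all_analysis.
Import Order.TTheory GRing.Theory Num.Theory.
Import numFieldNormedType.Exports.
Local Open Scope ring_scope.
Set Implicit Arguments. Unset Strict Implicit. Unset Printing Implicit Defensive.

(** * Extended natural numbers *)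

Lemma leo_refl x : leo x x.
Proof. by case: x => //= n; rewrite leqnn. Qed.

Lemma leoNone x : leo x None.
Proof. by case: x. Qed.

Lemma leo_trans y x z : leo x y -> leo y z -> leo x z.
Proof. by case: x y z => [x|] [y|] [z|] //=; apply: leq_trans. Qed.

Lemma leo_total x y : leo x y || leo y x.
Proof. by case: x y => [x|] [y|] //=; apply: leq_total. Qed.

Lemma leo_succ x y : leo (omap succn x) (omap succn y) = leo x y.
Proof. by case: x y => [x|] [y|]. Qed.

Lemma gto_succ k : gto (omap succn k) k = gto None k.
Proof. by case: k => [k|] //=; rewrite /gto /= ltnn. Qed.

Lemma leo_omaxl x y : leo x (omax x y).
Proof. by rewrite /omax; case: ifP => // _; apply: leo_refl. Qed.

Lemma leo_omaxr x y : leo y (omax x y).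
Proof.
rewrite /omax; case: ifP => [_|xy]; first exact: leo_refl.
by have := leo_total x y; rewrite xy.
Qed.

Lemma leo_ominl x y : leo (omin x y) x.
Proof.
rewrite /omin; case: ifP => [_|xy]; first exact: leo_refl.
by have := leo_total x y; rewrite xy.
Qed.

Lemma leo_ominr x y : leo (omin x y) y.
Proof. by rewrite /omin; case: ifP => // _; apply: leo_refl. Qed.

(** * The BFS labelling *)

Section BFS.
Variables (V : finType) (adj : rel V) (m : nat).
Local Notation pos := {ffun 'I_m -> V}.
Local Notation state := (pos * V)%type.

Definition bfs_extends (DQ DQ' : Dmap V m * seq state) (S : pred state)
    (k : option nat) : Prop :=
  DQ'.1 =1 (fun x => if S x then k else DQ.1 x) /\
  exists P, [/\ DQ'.2 = DQ.2 ++ P, uniq P & forall x, (x \in P) = S x].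

Lemma bfs_extends_eq DQ DQ' S S' k :
  S =1 S' -> bfs_extends DQ DQ' S k -> bfs_extends DQ DQ' S' k.
Proof.
move=> eqS [E1 [P [E2 uP mP]]]; split=> [x|]; first by rewrite E1 eqS.
by exists P; split=> // x; rewrite mP eqS.
Qed.

Lemma bfs_extends_nil DQ k : bfs_extends DQ DQ pred0 k.
Proof. by split=> //; exists [::]; rewrite cats0. Qed.

Lemma bfs_extends_trans DQ1 DQ2 DQ3 (S1 S2 : pred state) k :
  (forall x, S2 x -> ~~ S1 x) ->
  bfs_extends DQ1 DQ2 S1 k -> bfs_extends DQ2 DQ3 S2 k ->
  bfs_extends DQ1 DQ3 (predU S1 S2) k.
Proof.
move=> S12 [E1 [P1 [E2 u1 m1]]] [F1 [P2 [F2 u2 m2]]]; split=> [x|].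
  by rewrite F1 E1 /=; case: (S1 x); case: (S2 x).
exists (P1 ++ P2); split; first by rewrite F2 E2 catA.
  by rewrite cat_uniq u1 u2 andbT; apply/hasPn => x; rewrite m2 m1 => /S12.
by move=> x; rewrite mem_cat m1 m2.
Qed.

Lemma expand_np_extends sp ne k1 DQ np :
  bfs_extends DQ (expand_np adj sp ne k1 DQ np)
    [pred x | (x == (np, ne)) && nbrP adj sp np && (DQ.1 x == None)] k1.
Proof.
case: DQ => D Q; rewrite /expand_np /=; case: ifP => cond.
  split=> [x|]; first by rewrite /upd /=; case: eqP => [->|]; rewrite ?cond.
  exists ([:: (np, ne)]); split=> [|//|x]; first by rewrite cats1.
  by rewrite mem_seq1 /=; case: eqP => [->|] /=; rewrite ?cond.
split=> [x|]; first by rewrite /=; case: eqP => [->|]; rewrite ?cond.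
exists [::]; rewrite cats0; split=> // x.
by rewrite in_nil /=; case: eqP => [->|]; rewrite ?cond.
Qed.

Lemma foldl_expand_np_extends sp ne k1 DQ (l : seq pos) : uniq l ->
  bfs_extends DQ (foldl (expand_np adj sp ne k1) DQ l)
    [pred x | (x.2 == ne) && (x.1 \in l) && nbrP adj sp x.1 && (DQ.1 x == None)] k1.
Proof.
elim/last_ind: l => [_|l np IH].
  by apply: bfs_extends_eq (bfs_extends_nil _ _) => x; rewrite /= andbF.
rewrite rcons_uniq foldl_rcons => /andP [npl ul].
have ext := IH ul; set DQ1 := foldl _ _ _ in ext *.
have D1E b : DQ1.1 (np, b) = DQ.1 (np, b) by rewrite ext.1 /= (negbTE npl) andbF.
apply: bfs_extends_eq (bfs_extends_trans _ ext (expand_np_extends _ _ _ DQ1 np)).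
  move=> [a b]; rewrite /= mem_rcons in_cons.
  case: (eqVneq a np) => [->|anp] /=.
    by rewrite (negbTE npl) D1E xpair_eqE eqxx andbF andbT.
  have -> : ((a, b) == (np, ne)) = false by apply: contraNF anp => /eqP [->].
  by rewrite orbF.
by move=> x /andP [/andP [/eqP -> _] _] /=; rewrite (negbTE npl) andbF.
Qed.

Definition bfs_new (sp : pos) (se : V) (k : option nat) (D : Dmap V m) (x : state) :=
  nbr adj se x.2 && ~~ [exists ne', nbr adj x.2 ne' && gto (D (sp, ne')) k]
  && nbrP adj sp x.1 && (D x == None).

Lemma bfs_new_None sp se k D x : bfs_new sp se k D x -> D x = None.
Proof. by case/andP => _ /eqP. Qed.

Lemma expand_ne_extends sp se k DQ ne :
  bfs_extends DQ (expand_ne adj sp se k DQ ne)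
    [pred x | (x.2 == ne) && bfs_new sp se k DQ.1 x] (omap succn k).
Proof.
case: DQ => D Q; rewrite /expand_ne /=; case: ifP => cond.
  apply: bfs_extends_eq (foldl_expand_np_extends _ _ _ _ (enum_uniq _)) => -[a b].
  by rewrite /= mem_enum /bfs_new /=; case: eqP => [->|] //=; rewrite cond.
apply: bfs_extends_eq (bfs_extends_nil _ _) => -[a b].
by rewrite /= /bfs_new /=; case: eqP => [->|] //=; rewrite cond.
Qed.

Lemma foldl_expand_ne_extends sp se k DQ (l : seq V) : uniq l ->
  bfs_extends DQ (foldl (expand_ne adj sp se k) DQ l)
    [pred x | (x.2 \in l) && bfs_new sp se k DQ.1 x] (omap succn k).
Proof.
elim/last_ind: l => [_|l ne IH]; first exact: bfs_extends_eq (bfs_extends_nil _ _).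
rewrite rcons_uniq foldl_rcons => /andP [nel ul].
have ext := IH ul; set DQ1 := foldl _ _ _ in ext *; have E1 := ext.1.
(* States labelled earlier in this loop had label None, and [succ k] compares
   with [k] exactly as None does. *)
have gtoE y : gto (DQ1.1 y) k = gto (DQ.1 y) k.
  by rewrite E1 /=; case: ifP => // /andP [_ /bfs_new_None ->]; apply: gto_succ.
have newE x : x.2 = ne -> bfs_new sp se k DQ1.1 x = bfs_new sp se k DQ.1 x.
  move=> x2; rewrite /bfs_new E1 /= x2 (negbTE nel) /=.
  by congr (_ && ~~ _ && _ && _); apply: eq_existsb => ne'; rewrite gtoE.
apply: bfs_extends_eq (bfs_extends_trans _ ext (expand_ne_extends _ _ _ DQ1 ne)).
  move=> x; rewrite /= mem_rcons in_cons.
  by case: eqP => [x2|_]; rewrite ?orbF // newE // x2 (negbTE nel).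
by move=> x /andP [/eqP x2 _]; rewrite /= x2 (negbTE nel).
Qed.

Lemma bfs_step_extends D sp se Q :
  bfs_extends (D, Q) (bfs_step adj (D, (sp, se) :: Q))
    (bfs_new sp se (D (sp, se)) D) (omap succn (D (sp, se))).
Proof.
apply: bfs_extends_eq (foldl_expand_ne_extends _ _ _ _ (enum_uniq V)) => x.
by rewrite /= mem_enum.
Qed.

End BFS.

Section Extremal.
Variables (V : finType) (adj : rel V) (m : nat).
Local Notation pos := {ffun 'I_m -> V}.
Implicit Types (D : Dmap V m) (a sp : pos) (b se ne : V).

Lemma maxD_le D a se x :
  (forall b, nbr adj se b -> leo (D (a, b)) x) -> leo (maxD adj D a se) x.
Proof.
move=> H; apply: (big_ind (leo^~ x)) => //; first by case: x {H}.
by move=> y z; rewrite /omax; case: ifP.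
Qed.

Lemma le_maxD D a se b : nbr adj se b -> leo (D (a, b)) (maxD adj D a se).
Proof.
rewrite /maxD => seb; have : b \in index_enum V by rewrite mem_index_enum.
elim: (index_enum V) => // c r IH; rewrite in_cons big_cons.
case: (eqVneq b c) => [<- _|_ /= br]; first by rewrite seb; apply: leo_omaxl.
by case: ifP => _; [apply: leo_trans (IH br) (leo_omaxr _ _) | apply: IH].
Qed.

Lemma minD_ge D sp ne x :
  (forall a, nbrP adj sp a -> leo x (D (a, ne))) -> leo x (minD adj D sp ne).
Proof.
move=> H; apply: (big_ind (leo x)) => //; first exact: leoNone.
by move=> y z; rewrite /omin; case: ifP.
Qed.

Lemma minD_le D sp ne a : nbrP adj sp a -> leo (minD adj D sp ne) (D (a, ne)).
Proof.
rewrite /minD => spa; have : a \in index_enum pos by rewrite mem_index_enum.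
elim: (index_enum pos) => // c r IH; rewrite in_cons big_cons.
case: (eqVneq a c) => [<- _|_ /= ar]; first by rewrite spa; apply: leo_ominl.
by case: ifP => _; [apply: leo_trans (leo_ominr _ _) (IH ar) | apply: IH].
Qed.

End Extremal.

Section Neighbor.
Variables (V : finType) (adj : rel V) (m : nat).
Local Notation pos := {ffun 'I_m -> V}.
Hypothesis adj_sym : symmetric adj.

Lemma nbr_refl v : nbr adj v v.
Proof. by rewrite /nbr eqxx. Qed.

Lemma nbrP_refl (a : pos) : nbrP adj a a.
Proof. by apply/forallP => i; apply: nbr_refl. Qed.

Lemma nbr_sym v w : nbr adj v w = nbr adj w v.
Proof. by rewrite /nbr eq_sym adj_sym. Qed.

Lemma nbrP_sym (a b : pos) : nbrP adj a b = nbrP adj b a.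
Proof. by apply/forallP/forallP => H i; rewrite nbr_sym. Qed.

End Neighbor.

Lemma pairwise_in2 (T : eqType) (r : rel T) (s : seq T) :
  {in s &, forall x y, r x y} -> pairwise r s.
Proof.
elim: s => //= x s IH rs; apply/andP; split.
  by apply/allP => y ys; apply: rs; rewrite in_cons ?eqxx ?ys ?orbT.
by apply: IH => y z ys zs; apply: rs; rewrite in_cons ?ys ?zs orbT.
Qed.

Section Invariant.
Variables (V : finType) (adj : rel V) (m : nat).
Local Notation pos := {ffun 'I_m -> V}.
Local Notation state := (pos * V)%type.
Hypothesis adj_sym : symmetric adj.
Variable f : state -> bool.

Definition bfs_layered (D : Dmap V m) (Q : seq state) : Prop :=
  exists k, [/\ forall x, x \in Q -> exists2 d, D x = Some d & (k <= d <= k.+1)%N,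
    pairwise (fun x y => leo (D x) (D y)) Q &
    forall y, D y != None -> y \notin Q -> leo (D y) (Some k)].

Record bfs_inv (D : Dmap V m) (Q : seq state) : Prop := BfsInv {
  bfs_zero : forall x, (D x == Some 0%N) = f x;
  bfs_uniq : uniq Q;
  bfs_layers : bfs_layered D Q;
  bfs_pursuer_move : forall x k, D x = Some k.+1 ->
    exists2 a, nbrP adj x.1 a & forall b, nbr adj x.2 b -> leo (D (a, b)) (Some k);
  (* popping [x] ran the middle loop of the algorithm on [x] *)
  bfs_expanded : forall x k, D x = Some k -> x \notin Q ->
    forall ne, nbr adj x.2 ne ->
    (forall ne', nbr adj ne ne' -> leo (D (x.1, ne')) (Some k)) ->
    forall np, nbrP adj x.1 np -> leo (D (np, ne)) (Some k.+1) }.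

Lemma bfs_layered_queued D Q x : bfs_layered D Q -> x \in Q -> D x != None.
Proof. by case=> k [inQ _ _] /inQ [d -> _]. Qed.

Definition settled (D : Dmap V m) (Q : seq state) : {set state} :=
  [set x | (D x != None) && (x \notin Q)].

Section Step.
Variables (D : Dmap V m) (h : state) (Q : seq state) (k0 : nat).
Hypotheses (inv : bfs_inv D (h :: Q)) (Dh : D h = Some k0).
Let new := bfs_new adj h.1 h.2 (Some k0) D.
Variables (D' : Dmap V m) (P : seq state).
Hypotheses (D'E : D' =1 (fun x => if new x then Some k0.+1 else D x))
  (P_uniq : uniq P) (P_new : forall x, (x \in P) = new x).

Let D'_new x : new x -> D' x = Some k0.+1.
Proof. by move=> nx; rewrite D'E nx. Qed.

Let D'_old x : ~~ new x -> D' x = D x.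
Proof. by move=> /negbTE nx; rewrite D'E nx. Qed.

Let D'_finite x : D x != None -> D' x = D x.
Proof. by move=> Dx; apply: D'_old; apply: contra Dx => /bfs_new_None ->. Qed.

Let leo_D' y j : leo (D y) (Some j) -> leo (D' y) (Some j).
Proof. by case E: (D y) => [d|] // dj; rewrite D'_finite ?E. Qed.

Let leo_D y j : leo (D' y) (Some j) -> (j <= k0)%N -> leo (D y) (Some j).
Proof.
case: (boolP (new y)) => [ny|/D'_old -> //]; rewrite D'_new //= => k0j jk0.
by have := leq_trans k0j jk0; rewrite ltnn.
Qed.

Let queued_finite x : x \in Q -> D x != None.
Proof.
by move=> xQ; apply: bfs_layered_queued (bfs_layers inv) _; rewrite in_cons xQ orbT.
Qed.

Let queued_ge x : x \in Q -> leo (Some k0) (D x).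
Proof.
have [_ [_ + _]] := bfs_layers inv; rewrite pairwise_cons => /andP [/allP hQ _] xQ.
by have := hQ x xQ; rewrite /= Dh.
Qed.

Let label_le x d : D x = Some d -> (d <= k0.+1)%N.
Proof.
have [kq [inQ _ settledQ]] := bfs_layers inv.
have [dh] := inQ h (mem_head _ _); rewrite Dh => -[<-] /andP [kqk0 _].
case: (boolP (x \in h :: Q)) => [/inQ [d' -> /andP [_ dk]] [<-]|xQ Dx].
  by apply: leq_trans dk _.
by have := settledQ x; rewrite Dx => /(_ isT xQ) /= /leq_trans; apply; apply: ltnW.
Qed.

Let settled_le y : D y != None -> y \notin h :: Q -> leo (D y) (Some k0).
Proof.
have [kq [inQ _ settledQ]] := bfs_layers inv.
have [dh] := inQ h (mem_head _ _); rewrite Dh => -[<-] /andP [kqk0 _].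
by move=> /settledQ H /H; case: (D y) => //= d /leq_trans; apply.
Qed.

Lemma step_zero x : (D' x == Some 0%N) = f x.
Proof.
case: (boolP (new x)) => [nx|/D'_old ->]; last exact: bfs_zero inv x.
by rewrite D'_new // -(bfs_zero inv) (bfs_new_None nx).
Qed.

Lemma step_uniq : uniq (Q ++ P).
Proof.
have := bfs_uniq inv; rewrite cons_uniq cat_uniq P_uniq andbT => /andP [_ ->] /=.
apply/hasPn => x; rewrite P_new => /bfs_new_None Dx; apply/negP => xQ.
by have := queued_finite xQ; rewrite Dx.
Qed.

Lemma step_layered : bfs_layered D' (Q ++ P).
Proof.
have [_ [_ + _]] := bfs_layers inv; rewrite pairwise_cons => /andP [_ pairQ].
have D'_queued x : x \in Q -> D' x = D x.
  by move=> /queued_finite /D'_finite.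
exists k0; split.
- move=> x; rewrite mem_cat P_new => /orP [xQ|nx]; last first.
    by exists k0.+1; rewrite ?D'_new ?leqnSn ?leqnn.
  have := queued_finite xQ; case Dx: (D x) => [d|] // _.
  exists d; first by rewrite D'_queued // Dx.
  by rewrite (label_le Dx) andbT; have := queued_ge xQ; rewrite Dx.
- rewrite pairwise_cat; apply/and3P; split.
  + apply/allrelP => x y xQ; rewrite P_new => ny; rewrite (D'_new ny) D'_queued //.
    by have := queued_finite xQ; case Dx: (D x) => [d|] //= _; apply: label_le Dx.
  + rewrite (@eq_in_pairwise _ (mem Q) _ (fun x y => leo (D x) (D y))) // => x y xQ yQ.
    by rewrite !D'_queued.
  + apply: pairwise_in2 => x y; rewrite !P_new => /D'_new -> /D'_new ->.
    exact: leo_refl.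
- move=> y; rewrite mem_cat negb_or P_new => D'y /andP [yQ ny].
  rewrite D'_old // in D'y *; case: (eqVneq y h) => [->|yh]; first by rewrite Dh /=.
  by apply: settled_le; rewrite // in_cons negb_or yh.
Qed.

Lemma step_pursuer_move x k : D' x = Some k.+1 ->
  exists2 a, nbrP adj x.1 a & forall b, nbr adj x.2 b -> leo (D' (a, b)) (Some k).
Proof.
case: (boolP (new x)) => [nx|/D'_old ->]; last first.
  by move=> /(bfs_pursuer_move inv) [a xa Ha]; exists a => // b /Ha /leo_D'.
rewrite D'_new // => -[<-]; case/andP: nx => /andP [/andP [_ /existsPn noGt] hx] _.
exists h.1; first by rewrite (nbrP_sym adj_sym).
by move=> b xb; apply: leo_D'; have := noGt b; rewrite xb /= /gto negbK.
Qed.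

Lemma step_expanded x k : D' x = Some k -> x \notin Q ++ P ->
  forall ne, nbr adj x.2 ne ->
  (forall ne', nbr adj ne ne' -> leo (D' (x.1, ne')) (Some k)) ->
  forall np, nbrP adj x.1 np -> leo (D' (np, ne)) (Some k.+1).
Proof.
rewrite mem_cat negb_or P_new => D'x /andP [xQ nx] ne xne le_ne np xnp.
rewrite D'_old // in D'x; case: (eqVneq x h) => [xh|xh].
  move: D'x xne le_ne xnp; rewrite xh Dh => -[<-] xne le_ne xnp.
  case E: (D (np, ne)) => [d|]; first by rewrite D'_finite ?E //=; apply: label_le E.
  suff nnp : new (np, ne) by rewrite D'_new //= leqnn.
  rewrite /new /bfs_new /= xne xnp E eqxx !andbT /=; apply/existsPn => ne'.
  by apply/negP => /andP [nn' /negP []]; apply: leo_D (le_ne ne' nn') _.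
have xhQ : x \notin h :: Q by rewrite in_cons negb_or xh.
have kk0 : (k <= k0)%N by have := @settled_le x; rewrite D'x => /(_ isT xhQ).
apply: leo_D'; apply: (bfs_expanded inv D'x xhQ xne) xnp => ne' nn'.
exact: leo_D (le_ne ne' nn') kk0.
Qed.

Lemma step_inv : bfs_inv D' (Q ++ P).
Proof.
exact: BfsInv step_zero step_uniq step_layered step_pursuer_move step_expanded.
Qed.

Lemma step_settled : settled D' (Q ++ P) = h |: settled D (h :: Q).
Proof.
apply/setP => x; rewrite !inE mem_cat P_new.
case: (boolP (new x)) => [nx|nx]; last first.
  rewrite D'_old // orbF; case: (eqVneq x h) => [->|] //=.
  by rewrite Dh /=; case/andP: (bfs_uniq inv).
have xh : x != h by apply: contraTneq nx => ->; rewrite /new /bfs_new Dh andbF.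
by rewrite orbT andbF (bfs_new_None nx) (negbTE xh).
Qed.

End Step.

Lemma bfs_step_inv D h Q D' Q' : bfs_inv D (h :: Q) ->
  bfs_step adj (D, h :: Q) = (D', Q') ->
  bfs_inv D' Q' /\ #|settled D' Q'| = #|settled D (h :: Q)|.+1.
Proof.
case: h => sp se inv step.
have := bfs_layered_queued (bfs_layers inv) (mem_head _ _).
case Dh: (D (sp, se)) => [k0|] // _.
have := bfs_step_extends adj D sp se Q; rewrite step Dh => -[/= D'E [P [/= -> uP mP]]].
split; first exact: (step_inv inv Dh D'E uP mP).
rewrite (step_settled inv Dh D'E mP) cardsU1.
by have -> : (sp, se) \notin settled D ((sp, se) :: Q) by rewrite inE mem_head andbF.
Qed.

Lemma bfs_init_inv : bfs_inv (D_init f) (Q_init f).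
Proof.
have memQ x : (x \in Q_init f) = f x by rewrite mem_filter mem_enum andbT.
split.
- by move=> x; rewrite /D_init; case: (f x).
- by rewrite filter_uniq // enum_uniq.
- exists 0%N; split.
  + by move=> x; rewrite memQ /D_init => ->; exists 0%N.
  + by apply: pairwise_in2 => x y; rewrite !memQ /D_init => -> ->.
  + by move=> y; rewrite memQ /D_init; case: (f y).
- by move=> x k; rewrite /D_init; case: (f x).
- by move=> x k; rewrite memQ /D_init; case: (f x).
Qed.

(* Each step on a nonempty queue settles one more state, so the queue is empty
   after [#|state|] steps. *)
Lemma bfs_iter_inv n :
  let DQ := iter n (@bfs_step V adj m) (D_init f, Q_init f) in
  bfs_inv DQ.1 DQ.2 /\ (DQ.2 = [::] \/ (n <= #|settled DQ.1 DQ.2|)%N).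
Proof.
elim: n => [|n]; first by split; [exact: bfs_init_inv | right].
rewrite [iter n.+1 _ _]iterS; case: (iter n _ _) => D [|h Q] [inv card].
  by split=> //; left.
case E: (bfs_step adj (D, h :: Q)) => [D' Q'] /=.
have [inv' ->] := bfs_step_inv inv E.
split=> //; case: Q' {E inv'} => [|? ?]; [left | right] => //.
by case: card => // ?; rewrite ltnS.
Qed.

Lemma settled_card_lt D y Q : (#|settled D (y :: Q)| < #|{: state}|)%N.
Proof.
rewrite -cardsT; apply/proper_card/properP; split; first exact: finset.subsetT.
by exists y; rewrite !inE ?eqxx /= ?andbF.
Qed.

Lemma Dalg_inv : bfs_inv (Dalg adj f) [::].
Proof.
rewrite /Dalg; have := bfs_iter_inv #|{: state}|.
case: (iter _ _ _) => D [|y Q] [inv] //= [] // card.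
by have := leq_ltn_trans card (settled_card_lt D y Q); rewrite ltnn.
Qed.

End Invariant.

Section Dalg.
Variables (V : finType) (adj : rel V) (m : nat).
Local Notation pos := {ffun 'I_m -> V}.
Local Notation state := (pos * V)%type.
Hypothesis adj_sym : symmetric adj.
Variable f : state -> bool.
Local Notation D := (Dalg adj f).

Lemma Dalg_zero x : (D x == Some 0%N) = f x.
Proof. exact: bfs_zero (Dalg_inv adj_sym f) x. Qed.

Lemma Dalg_nonterminal x : ~~ f x -> exists y, D x = omap succn y.
Proof.
by rewrite -Dalg_zero; case: (D x) => [[|k]|] // _; [exists (Some k) | exists None].
Qed.

Lemma Dalg_pursuer_move x : ~~ f x ->
  exists2 a, nbrP adj x.1 a & forall b, nbr adj x.2 b -> leo (omap succn (D (a, b))) (D x).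
Proof.
move=> /Dalg_nonterminal [[k|] Dx].
  have [a xa Ha] := bfs_pursuer_move (Dalg_inv adj_sym f) Dx.
  by exists a => // b /Ha; rewrite Dx leo_succ.
by exists x.1 => [|b _]; rewrite ?nbrP_refl // Dx leoNone.
Qed.

Lemma Dalg_evader_reply x a : nbrP adj x.1 a ->
  exists2 b, nbr adj x.2 b & leo (D x) (omap succn (D (a, b))).
Proof.
(* Take the reply [b] maximising the label of [(a, b)]: when [(a, b)] was popped,
   [se] passed the test of the middle loop, so [(sp, se)] got a label at most
   [D (a, b) + 1]. *)
case: x => sp se /= spa.
case: (boolP [exists b, nbr adj se b && (D (a, b) == None)]).
  by case/existsP => b /andP [seb /eqP Dab]; exists b; rewrite // Dab leoNone.
move=> /existsPn finite.
case: (@arg_maxnP V se (nbr adj se) (fun b => odflt 0%N (D (a, b))) (nbr_refl adj se))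
  => b seb bmax.
exists b => //.
case Dab: (D (a, b)) => [k|]; last by have := finite b; rewrite seb Dab.
apply: (bfs_expanded (Dalg_inv adj_sym f) Dab) => //=.
- by rewrite (nbr_sym adj_sym).
- move=> ne' sene'; have := finite ne'; rewrite sene' /=.
  case Dane: (D (a, ne')) => [d|] // _.
  by have := bmax ne' sene'; rewrite Dane Dab.
- by rewrite (nbrP_sym adj_sym).
Qed.

Lemma Dalg_mu_step mu x b : is_mu_of adj D mu -> ~~ f x -> nbr adj x.2 b ->
  leo (omap succn (D (mu x, b))) (D x).
Proof.
move=> mu_min fx xb; have [y Dx] := Dalg_nonterminal fx; rewrite Dx leo_succ.
have [a xa Ha] := Dalg_pursuer_move fx.
apply: leo_trans (le_maxD D (mu x) xb) _; apply: leo_trans ((mu_min x).2 a xa) _.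
by apply: maxD_le => b' /Ha; rewrite Dx leo_succ.
Qed.

Lemma Dalg_nu_step nu x a b0 : is_nu_of adj D nu -> ~~ f x -> nbr adj x.2 b0 ->
  (forall a', nbrP adj x.1 a' -> leo (D x) (omap succn (D (a', b0)))) ->
  nbrP adj x.1 a -> leo (D x) (omap succn (D (a, nu x))).
Proof.
move=> nu_max fx xb0 b0_good xa; have [y Dx] := Dalg_nonterminal fx; rewrite Dx leo_succ.
apply: leo_trans _ (minD_le D (nu x) xa); apply: leo_trans _ ((nu_max x).2 b0 xb0).
by apply: minD_ge => a' /b0_good; rewrite Dx leo_succ.
Qed.

End Dalg.

(** * Discounted values *)

Section Gpow.
Variables (R : numDomainType) (gamma : R).
Hypotheses (gamma_gt0 : 0 < gamma) (gamma_lt1 : gamma < 1).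

Lemma gpow_ge0 x : 0 <= gpow gamma x.
Proof. by case: x => [n|] //=; rewrite exprn_ge0 // ltW. Qed.

Lemma gpow_le1 x : gpow gamma x <= 1.
Proof. by case: x => [n|] //=; rewrite exprn_ile1 // ltW. Qed.

Lemma gpowS x : gpow gamma (omap succn x) = gamma * gpow gamma x.
Proof. by case: x => [n|] /=; rewrite ?exprS ?mulr0. Qed.

Lemma ler_gpow x y : (gpow gamma y <= gpow gamma x) = leo x y.
Proof.
case: x y => [a|] [b|] /=; first exact: ler_iXn2l.
- by rewrite exprn_ge0 // ltW.
- by rewrite lt_geF // exprn_gt0.
- exact: lexx.
Qed.

End Gpow.

Lemma eqfun_of_contraction (R : realDomainType) (T : finType) (k : R) (x y : T -> R) :
  0 <= k < 1 ->
  (forall t, exists t', x t - y t <= k * `|x t' - y t'|) ->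
  (forall t, exists t', y t - x t <= k * `|x t' - y t'|) ->
  x =1 y.
Proof.
move=> /andP [k_ge0 k_lt1] xy yx t; pose e t := `|x t - y t|.
have [t0 _ e_max] := arg_maxP e (isT : xpredT t).
have e_contr t' : e t' <= k * e t0.
  rewrite /e /= ler_norml; apply/andP; split.
    rewrite lerNl opprB; have [t'' /le_trans] := yx t'; apply.
    by apply: ler_wpM2l => //; apply: e_max.
  have [t'' /le_trans] := xy t'; apply.
  by apply: ler_wpM2l => //; apply: e_max.
have e0 : e t0 <= 0.
  have : (1 - k) * e t0 <= 0 by rewrite mulrBl mul1r subr_le0.
  by rewrite pmulr_rle0 // subr_gt0.
by apply/eqP; rewrite -subr_eq0 -normr_le0 (le_trans (e_max t _)).
Qed.

Section Value.
Variables (V : finType) (adj : rel V) (m : nat) (R : realType).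
Local Notation pos := {ffun 'I_m -> V}.
Local Notation state := (pos * V)%type.
Variables (f : state -> bool) (gamma : R).
Hypotheses (gamma_gt0 : 0 < gamma) (gamma_lt1 : gamma < 1).
Variables (mu : state -> pos -> R) (nu : state -> V -> R).
Hypotheses (mu_pol : pursuer_policy adj mu) (nu_pol : evader_policy adj nu).
Local Notation Vn := (Vn f gamma mu nu).
Local Notation value := (value f gamma mu nu).
Local Notation expect s X := (\sum_(a : pos) \sum_(b : V) mu s a * nu s b * X a b).

Lemma expect_const s c : expect s (fun _ _ => c) = c.
Proof.
have [_ [_ mu1]] := mu_pol s; have [_ [_ nu1]] := nu_pol s.
under eq_bigr do rewrite -mulr_suml -mulr_sumr nu1 mulr1.
by rewrite -mulr_suml mu1 mul1r.
Qed.

Lemma ler_expect s (X Y : pos -> V -> R) :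
  (forall a b, mu s a != 0 -> nu s b != 0 -> X a b <= Y a b) ->
  expect s X <= expect s Y.
Proof.
move=> XY; have [mu0 _] := mu_pol s; have [nu0 _] := nu_pol s.
apply: ler_sum => a _; apply: ler_sum => b _.
have [->|mua] := eqVneq (mu s a) 0; first by rewrite !mul0r.
have [->|nub] := eqVneq (nu s b) 0; first by rewrite mulr0 !mul0r.
by rewrite ler_wpM2l ?mulr_ge0 ?XY.
Qed.

Lemma mulr_expect s c (X : pos -> V -> R) :
  c * expect s X = expect s (fun a b => c * X a b).
Proof.
rewrite mulr_sumr; apply: eq_bigr => a _; rewrite mulr_sumr.
by apply: eq_bigr => b _; rewrite mulrCA.
Qed.

Lemma Vn_ge0 n s : 0 <= Vn n s.
Proof.
elim: n s => [|n IH] s /=; case: (f s) => //.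
rewrite mulr_ge0 ?(ltW gamma_gt0) // -[leLHS](expect_const s 0).
by apply: ler_expect => a b _ _; apply: IH.
Qed.

Lemma Vn_le_supersolution (W : state -> R) :
  (forall s, 0 <= W s) -> (forall s, f s -> 1 <= W s) ->
  (forall s, ~~ f s -> forall a b, mu s a != 0 -> nu s b != 0 ->
     gamma * W (a, b) <= W s) ->
  forall n s, Vn n s <= W s.
Proof.
move=> W0 W1 W_step; elim=> [|n IH] s /=; case: ifPn => [/W1 //|fs] //.
rewrite mulr_expect -[leRHS](expect_const s (W s)); apply: ler_expect => a b mua nub.
exact: le_trans (ler_wpM2l (ltW gamma_gt0) (IH _)) (W_step s fs a b mua nub).
Qed.

Lemma subsolution_le_Vn (W : state -> R) :
  (forall s, W s <= 1) ->
  (forall s, ~~ f s -> forall a b, mu s a != 0 -> nu s b != 0 ->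
     W s <= gamma * W (a, b)) ->
  forall n s, W s - gamma ^+ n <= Vn n s.
Proof.
move=> W1 W_step; elim=> [|n IH] s.
  by apply: le_trans (Vn_ge0 0 s); rewrite expr0 subr_le0.
rewrite /=; case: ifPn => fs.
  by rewrite lerBlDr (le_trans (W1 s)) // lerDl exprn_ge0 // ltW.
rewrite mulr_expect -[leLHS](expect_const s); apply: ler_expect => a b mua nub.
apply: le_trans (_ : gamma * (W (a, b) - gamma ^+ n) <= _).
  by rewrite mulrBr -exprS lerB // W_step.
by rewrite ler_wpM2l ?IH // ltW.
Qed.

Lemma Vn_le1 n s : Vn n s <= 1.
Proof.
by apply: (Vn_le_supersolution (W := fun _ => 1)) => // t _ a b _ _; rewrite mulr1 ltW.
Qed.

Lemma Vn_nondecreasing s : nondecreasing_seq (Vn ^~ s).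
Proof.
apply/nondecreasing_seqP => n; elim: n s => [|n IH] s /=; case: ifP => // _.
  rewrite mulr_ge0 ?(ltW gamma_gt0) // -[leLHS](expect_const s 0).
  by apply: ler_expect => a b _ _; exact: (Vn_ge0 0 (a, b)).
by rewrite ler_wpM2l ?(ltW gamma_gt0) // ler_expect // => a b _ _; apply: IH.
Qed.

Lemma Vn_cvg s : cvgn (Vn ^~ s).
Proof.
apply: nondecreasing_is_cvgn; first exact: Vn_nondecreasing.
by exists 1 => _ [n _ <-]; apply: Vn_le1.
Qed.

Lemma Vn_le_value n s : Vn n s <= value s.
Proof. exact: (@nondecreasing_cvgn_le _ _ (Vn_nondecreasing s) (@Vn_cvg s) n). Qed.

Lemma value_le_supersolution (W : state -> R) :
  (forall s, 0 <= W s) -> (forall s, f s -> 1 <= W s) ->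
  (forall s, ~~ f s -> forall a b, mu s a != 0 -> nu s b != 0 ->
     gamma * W (a, b) <= W s) ->
  forall s, value s <= W s.
Proof.
move=> W0 W1 W_step s; apply: limr_le; first exact: Vn_cvg.
by apply: nearW => n; apply: Vn_le_supersolution.
Qed.

Lemma value_ge_subsolution (W : state -> R) :
  (forall s, W s <= 1) ->
  (forall s, ~~ f s -> forall a b, mu s a != 0 -> nu s b != 0 ->
     W s <= gamma * W (a, b)) ->
  forall s, W s <= value s.
Proof.
move=> W1 W_step s.
have geom : ((fun n => value s + gamma ^+ n) @ \oo --> value s + 0)%classic.
  by apply: cvgD; [exact: cvg_cst | apply: cvg_expr; rewrite ger0_norm ?ltW].
rewrite -[leRHS]addr0 -(cvg_lim _ geom) //; apply: limr_ge; first exact: cvgP geom.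
apply: nearW => n; rewrite -lerBlDr.
exact: le_trans (subsolution_le_Vn W1 W_step n s) (Vn_le_value n s).
Qed.

Lemma value_ge0 s : 0 <= value s.
Proof. exact: le_trans (Vn_ge0 0 s) (Vn_le_value 0 s). Qed.

Lemma value_le1 s : value s <= 1.
Proof.
by apply: (value_le_supersolution (W := fun _ => 1)) => // t _ a b _ _; rewrite mulr1 ltW.
Qed.

Lemma value_terminal s : f s -> value s = 1.
Proof.
move=> fs; apply/le_anti; rewrite value_le1 /=.
by have := Vn_le_value 0 s; rewrite /= fs.
Qed.

End Value.

Section Deterministic.
Variables (V : finType) (adj : rel V) (m : nat) (R : realType).
Local Notation pos := {ffun 'I_m -> V}.
Local Notation state := (pos * V)%type.
Variables (f : state -> bool) (gamma : R).
Hypotheses (gamma_gt0 : 0 < gamma) (gamma_lt1 : gamma < 1).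

Lemma det_pol_supp (T : finType) (p : state -> T) s a : det_pol R p s a != 0 -> a = p s.
Proof. by rewrite /det_pol; case: (eqVneq a (p s)) => //= _; rewrite eqxx. Qed.

Lemma sum_det_pol (T : finType) (p : state -> T) s : \sum_(a : T) det_pol R p s a = 1.
Proof. by rewrite (bigD1 (p s)) //= /det_pol eqxx big1 ?addr0 // => a /negbTE ->. Qed.

Lemma det_pursuer_policyP (p : state -> pos) :
  pursuer_policy adj (det_pol R p) <-> forall s, nbrP adj s.1 (p s).
Proof.
split=> [p_pol s|p_nbr s]; first by apply: (p_pol s).2.1; rewrite /det_pol eqxx oner_neq0.
by split=> [a|]; [rewrite ler0n | split=> [a /det_pol_supp ->|]; rewrite ?sum_det_pol].
Qed.

Lemma det_evader_policyP (q : state -> V) :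
  evader_policy adj (det_pol R q) <-> forall s, nbr adj s.2 (q s).
Proof.
split=> [q_pol s|q_nbr s]; first by apply: (q_pol s).2.1; rewrite /det_pol eqxx oner_neq0.
by split=> [b|]; [rewrite ler0n | split=> [b /det_pol_supp ->|]; rewrite ?sum_det_pol].
Qed.

Lemma expect_det_pol (p : state -> pos) (q : state -> V) (X : state -> R) s :
  \sum_(a : pos) \sum_(b : V) det_pol R p s a * det_pol R q s b * X (a, b) = X (p s, q s).
Proof.
have det0 (T : finType) (r : state -> T) c : c != r s -> det_pol R r s c = 0.
  by rewrite /det_pol => /negbTE ->.
rewrite (bigD1 (p s)) //= [X in _ + X]big1 => [|a pa]; last first.
  by rewrite big1 // => b _; rewrite (det0 _ p) // !mul0r.
rewrite addr0 (bigD1 (q s)) //= [X in _ + X]big1 => [|b qb]; last first.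
  by rewrite (det0 _ q) // mulr0 mul0r.
by rewrite /det_pol !eqxx !mul1r !addr0.
Qed.

Lemma value_det (p : state -> pos) (q : state -> V) :
  pursuer_policy adj (det_pol R p) -> evader_policy adj (det_pol R q) ->
  forall s, value f gamma (det_pol R p) (det_pol R q) s =
    if f s then 1 else gamma * value f gamma (det_pol R p) (det_pol R q) (p s, q s).
Proof.
move=> p_pol q_pol s; case: ifPn => fs; first exact: value_terminal.
have Vn_cvg' s' := @Vn_cvg _ _ _ _ f _ gamma_gt0 gamma_lt1 _ _ p_pol q_pol s'.
pose U := Vn f gamma (det_pol R p) (det_pol R q).
have succ_cvg : ([sequence U n.+1 s]_n @ \oo -->
    value f gamma (det_pol R p) (det_pol R q) s)%classic.
  by rewrite (cvg_shiftS (U^~ s)); apply: Vn_cvg'.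
have U_succ : [sequence U n.+1 s]_n = (fun n => gamma * U n (p s, q s)).
  by apply: boolp.funext => n; rewrite /U /= (negbTE fs) expect_det_pol.
rewrite U_succ in succ_cvg.
have scaled_cvg : ((fun n => gamma * U n (p s, q s)) @ \oo -->
    gamma * value f gamma (det_pol R p) (det_pol R q) (p s, q s))%classic.
  by apply: cvgM; [exact: cvg_cst | apply: Vn_cvg'].
exact: cvg_unique succ_cvg scaled_cvg.
Qed.

End Deterministic.

(** * Equilibria *)

Section Equilibria.
Variables (V : finType) (adj : rel V) (m : nat) (R : realType).
Local Notation pos := {ffun 'I_m -> V}.
Local Notation state := (pos * V)%type.
Variables (f : state -> bool) (gamma : R).
Hypotheses (gamma_gt0 : 0 < gamma) (gamma_lt1 : gamma < 1).
Local Notation value := (value f gamma).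
Local Notation is_NE := (is_NE adj f gamma).

Lemma NE_value_unique mu1 nu1 mu2 nu2 :
  is_NE mu1 nu1 -> is_NE mu2 nu2 -> value mu1 nu1 =1 value mu2 nu2.
Proof.
move=> [P1 [N1 NE1]] [P2 [N2 NE2]] s; apply/le_anti/andP; split.
  exact: le_trans (NE1 _ _ P1 N2 s).2 (NE2 _ _ P1 N2 s).1.
exact: le_trans (NE2 _ _ P2 N1 s).2 (NE1 _ _ P2 N1 s).1.
Qed.

Section Saddle.
Variables (U : state -> R) (mu : state -> pos) (nu : state -> V).
Hypotheses (U_ge0 : forall s, 0 <= U s) (U_le1 : forall s, U s <= 1)
  (U_terminal : forall s, f s -> U s = 1).
Hypotheses (mu_nbr : forall s, nbrP adj s.1 (mu s)) (nu_nbr : forall s, nbr adj s.2 (nu s)).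
Hypothesis mu_step :
  forall s, ~~ f s -> forall b, nbr adj s.2 b -> U s <= gamma * U (mu s, b).
Hypothesis nu_step :
  forall s, ~~ f s -> forall a, nbrP adj s.1 a -> gamma * U (a, nu s) <= U s.

Let mu_pol : pursuer_policy adj (det_pol R mu). Proof. exact/det_pursuer_policyP. Qed.
Let nu_pol : evader_policy adj (det_pol R nu). Proof. exact/det_evader_policyP. Qed.

Lemma saddle_le_value nu' : evader_policy adj nu' ->
  forall s, U s <= value (det_pol R mu) nu' s.
Proof.
move=> nu'_pol; apply: (value_ge_subsolution gamma_gt0 gamma_lt1 mu_pol nu'_pol) => //.
by move=> s fs a b /det_pol_supp -> nu'b; apply: mu_step => //; apply: (nu'_pol s).2.1.
Qed.

Lemma value_le_saddle mu' : pursuer_policy adj mu' ->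
  forall s, value mu' (det_pol R nu) s <= U s.
Proof.
move=> mu'_pol; apply: (value_le_supersolution gamma_gt0 gamma_lt1 mu'_pol nu_pol) => //.
  by move=> s /U_terminal ->.
by move=> s fs a b mu'a /det_pol_supp ->; apply: nu_step => //; apply: (mu'_pol s).2.1.
Qed.

Lemma det_saddle_NE : is_NE (det_pol R mu) (det_pol R nu).
Proof.
split=> //; split=> // mu' nu' mu'_pol nu'_pol s.
have -> : value (det_pol R mu) (det_pol R nu) s = U s.
  by apply/le_anti; rewrite value_le_saddle // saddle_le_value.
by rewrite value_le_saddle // saddle_le_value.
Qed.

End Saddle.

Section PureNE.
Variables (p : state -> pos) (q : state -> V).
Hypothesis pq_NE : is_NE (det_pol R p) (det_pol R q).
Local Notation W := (value (det_pol R p) (det_pol R q)).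

Lemma pure_NE_pursuer_dev s a : ~~ f s -> nbrP adj s.1 a -> gamma * W (a, q s) <= W s.
Proof.
(* Deviating to [a] at [s] alone would make W a subsolution for the deviating
   pursuers, whose value at [s] would then exceed W s. *)
move=> fs sa; have [p_pol [q_pol NE]] := pq_NE.
pose p' t := if t == s then a else p t.
have p's : p' s = a by rewrite /p' eqxx.
have p'_pol : pursuer_policy adj (det_pol R p').
  apply/det_pursuer_policyP => t; rewrite /p'; case: eqP => [->|_] //.
  by move/det_pursuer_policyP: p_pol.
rewrite leNgt; apply/negP => gain.
have W_le t : W t <= value (det_pol R p') (det_pol R q) t.
  apply: (value_ge_subsolution gamma_gt0 gamma_lt1 p'_pol q_pol).
    exact: (value_le1 f gamma_gt0 gamma_lt1 p_pol q_pol).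
  move=> t' ft' a' b' /det_pol_supp -> /det_pol_supp ->; rewrite /p'.
  case: eqP => [->|_]; first exact: ltW.
  by rewrite (value_det f gamma_gt0 gamma_lt1 p_pol q_pol) (negbTE ft').
have := (NE _ _ p'_pol q_pol s).1.
rewrite (value_det f gamma_gt0 gamma_lt1 p'_pol q_pol) (negbTE fs) p's => dev.
have := lt_le_trans gain (le_trans (ler_wpM2l (ltW gamma_gt0) (W_le _)) dev).
by rewrite ltxx.
Qed.

Lemma pure_NE_evader_dev s b : ~~ f s -> nbr adj s.2 b -> W s <= gamma * W (p s, b).
Proof.
move=> fs sb; have [p_pol [q_pol NE]] := pq_NE.
pose q' t := if t == s then b else q t.
have q's : q' s = b by rewrite /q' eqxx.
have q'_pol : evader_policy adj (det_pol R q').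
  apply/det_evader_policyP => t; rewrite /q'; case: eqP => [->|_] //.
  by move/det_evader_policyP: q_pol.
rewrite leNgt; apply/negP => gain.
have le_W t : value (det_pol R p) (det_pol R q') t <= W t.
  apply: (value_le_supersolution gamma_gt0 gamma_lt1 p_pol q'_pol).
  - exact: (value_ge0 f gamma_gt0 gamma_lt1 p_pol q_pol).
  - by move=> t' ft'; rewrite (value_terminal gamma_gt0 gamma_lt1 p_pol q_pol).
  move=> t' ft' a' b' /det_pol_supp -> /det_pol_supp ->; rewrite /q'.
  case: eqP => [->|_]; first exact: ltW.
  by rewrite [leRHS](value_det f gamma_gt0 gamma_lt1 p_pol q_pol) (negbTE ft').
have := (NE _ _ p_pol q'_pol s).2.
rewrite [leRHS](value_det f gamma_gt0 gamma_lt1 p_pol q'_pol) (negbTE fs) q's => dev.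
have := le_lt_trans (le_trans dev (ler_wpM2l (ltW gamma_gt0) (le_W _))) gain.
by rewrite ltxx.
Qed.

End PureNE.

Section DalgValue.
Hypothesis adj_sym : symmetric adj.
Local Notation D := (Dalg adj f).

Lemma gpow_Dalg_terminal s : f s -> gpow gamma (D s) = 1.
Proof. by rewrite -(Dalg_zero adj_sym) => /eqP ->. Qed.

Lemma gpow_Dalg_pursuer_move s : ~~ f s ->
  exists2 a, nbrP adj s.1 a &
    forall b, nbr adj s.2 b -> gpow gamma (D s) <= gamma * gpow gamma (D (a, b)).
Proof.
move=> /(Dalg_pursuer_move adj_sym) [a sa Ha]; exists a => // b /Ha.
by rewrite -gpowS ler_gpow.
Qed.

Lemma gpow_Dalg_evader_reply s a : nbrP adj s.1 a ->
  exists2 b, nbr adj s.2 b & gamma * gpow gamma (D (a, b)) <= gpow gamma (D s).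
Proof.
move=> /(Dalg_evader_reply adj_sym f) [b sb Hb]; exists b => //.
by rewrite -gpowS ler_gpow.
Qed.

Variables (p : state -> pos) (q : state -> V).
Hypothesis pq_NE : is_NE (det_pol R p) (det_pol R q).
Local Notation W := (value (det_pol R p) (det_pol R q)).

Lemma pure_NE_value_Dalg : W =1 (fun s => gpow gamma (D s)).
Proof.
have [p_pol [q_pol _]] := pq_NE.
have p_nbr := (det_pursuer_policyP adj R p).1 p_pol.
have q_nbr := (det_evader_policyP adj R q).1 q_pol.
have terminal t : f t -> W t - gpow gamma (D t) = 0.
  move=> ft; rewrite (value_det f gamma_gt0 gamma_lt1 p_pol q_pol) ft.
  by rewrite gpow_Dalg_terminal // subrr.
apply: (@eqfun_of_contraction R _ gamma W (fun s => gpow gamma (D s))).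
  by rewrite (ltW gamma_gt0) gamma_lt1.
- move=> t; case: (boolP (f t)) => ft.
    by exists t; rewrite terminal // normr0 mulr0.
  have [b tb Hb] := gpow_Dalg_evader_reply (p_nbr t).
  exists (p t, b); apply: le_trans (lerB (pure_NE_evader_dev pq_NE ft tb) Hb) _.
  by rewrite -mulrBr ler_wpM2l ?ler_norm ?ltW.
- move=> t; case: (boolP (f t)) => ft.
    by exists t; rewrite -opprB terminal // oppr0 normr0 mulr0.
  have [a ta Ha] := gpow_Dalg_pursuer_move ft.
  exists (a, q t).
  apply: le_trans (lerB (Ha _ (q_nbr t)) (pure_NE_pursuer_dev pq_NE ft ta)) _.
  by rewrite -mulrBr distrC ler_wpM2l ?ler_norm ?ltW.
Qed.

Lemma pure_NE_evader_commit s a : ~~ f s -> nbrP adj s.1 a ->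
  leo (D s) (omap succn (D (a, q s))).
Proof.
move=> fs sa; rewrite -(ler_gpow gamma_gt0 gamma_lt1) gpowS -!pure_NE_value_Dalg.
exact: pure_NE_pursuer_dev.
Qed.

End DalgValue.

End Equilibria.

Theorem theorem1 (R : realType) (V : finType) (adj : rel V) (m : nat)
    (f : {ffun 'I_m -> V} * V -> bool) (gamma : R)
    (mu : {ffun 'I_m -> V} * V -> {ffun 'I_m -> V})
    (nu : {ffun 'I_m -> V} * V -> V) :
  symmetric adj ->
  (0 < m)%N ->
  0 < gamma < 1 ->
  is_mu_of adj (Dalg adj f) mu ->
  is_nu_of adj (Dalg adj f) nu ->
  has_pure_NE adj f gamma ->
  (forall (muS : {ffun 'I_m -> V} * V -> {ffun 'I_m -> V} -> R)
          (nuS : {ffun 'I_m -> V} * V -> V -> R),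
      is_NE adj f gamma muS nuS ->
      forall s, value f gamma muS nuS s = gpow gamma (Dalg adj f s)) /\
  is_NE adj f gamma (det_pol R mu) (det_pol R nu).
Proof.
move=> adj_sym _ /andP [gamma_gt0 gamma_lt1] mu_min nu_max [p [q pq_NE]].
split=> [muS nuS muS_NE s|].
  rewrite (NE_value_unique muS_NE pq_NE).
  exact: (pure_NE_value_Dalg gamma_gt0 gamma_lt1 adj_sym pq_NE).
have q_nbr := (det_evader_policyP adj R q).1 pq_NE.2.1.
apply: (det_saddle_NE gamma_gt0 gamma_lt1 (U := fun s => gpow gamma (Dalg adj f s))).
- by move=> s; apply: gpow_ge0.
- by move=> s; apply: gpow_le1.
- exact: gpow_Dalg_terminal.
- by move=> s; case: (mu_min s).
- by move=> s; case: (nu_max s).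
- move=> s fs b sb; rewrite -gpowS ler_gpow //.
  exact: Dalg_mu_step.
- move=> s fs a sa; rewrite -gpowS ler_gpow //.
  apply: (Dalg_nu_step adj_sym nu_max fs (q_nbr s)) sa => a' sa'.
  exact: (pure_NE_evader_commit gamma_gt0 gamma_lt1 adj_sym pq_NE fs sa').
Qed.
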